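(* Let $n\ge 1$ and let $w$ be a word of length $m$ over the alphabet $[n+1]$ that contains, for every permutation $\pi$ of length $n$, a subsequence order-isomorphic to $\pi$. Then $(n+1)\left(\frac{m}{n+1}\right)^n\ge n!$. Consequently $m\ge (n+1)\,(n!/(n+1))^{1/n}$, and in particular $m\ge (1-o(1))\,n^2/e$ as $n\to\infty$.
   Context: A permutation of length $n$ is a word containing each letter of $[n]=\{1,\dots,n\}$ exactly once. Words $u,v$ of length $k$ are order-isomorphic if $u(i)>u(j)\iff v(i)>v(j)$ for all $i,j\in[k]$. A word $w$ contains a subsequence order-isomorphic to $\pi$ if there are indices $i_1<\cdots<i_n$ with $w(i_1)\cdots w(i_n)$ order-isomorphic to $\pi$. *)

From HB Require Import structures.
From mathcomp Require Import all_boot all_order all_algebra.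
Set Implicit Arguments. Unset Strict Implicit. Unset Printing Implicit Defensive.

Definition is_perm (n : nat) (p : seq nat) : Prop := perm_eq p (iota 1 n).

Definition word_over (k : nat) (w : seq nat) : Prop :=
  all (fun x => (1 <= x) && (x <= k)) w.

Definition order_iso (u v : seq nat) : Prop :=
  size u = size v /\
  forall i j, i < size u -> j < size u ->
    (nth 0 u j < nth 0 u i <-> nth 0 v j < nth 0 v i).

Definition contains_pattern (w pi : seq nat) : Prop :=
  exists u : seq nat, subseq u w /\ order_iso u pi.

From HB Require Import structures.
From mathcomp Require Import all_boot all_order all_algebra ring.
Import Order.TTheory GRing.Theory Num.Theory.
Set Implicit Arguments. Unset Strict Implicit.
Local Open Scope ring_scope.

(* An occurrence of a permutation of length n in w is an n-subsequence of w
   with pairwise distinct letters, and it determines the permutation (its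
   standardization).  Hence n! is at most the number of such subsequences,
   which is e_n(c_1, ..., c_(n+1)) where c_a counts the occurrences of the
   letter a in w.  Since c_1 + ... + c_(n+1) = m, the bound
   e_n(c) <= (n+1) (m/(n+1))^n follows by induction on n: peeling off one
   variable, AM-GM bounds e_(n+1) of the others, which is their product, and
   Bernoulli's inequality recombines the two terms. *)

Section Esym.
Variable R : pzSemiRingType.

Fixpoint esym (k : nat) (xs : seq R) : R :=
  match k, xs with
  | 0, _ => 1
  | k'.+1, [::] => 0
  | k'.+1, x :: xs' => x * esym k' xs' + esym k xs'
  end.

Lemma esym0 xs : esym 0 xs = 1. Proof. by case: xs. Qed.

Lemma esym_gt_size k xs : (size xs < k)%N -> esym k xs = 0.
Proof.
elim: xs k => [|x xs IH] [|k] //= ltk.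
by rewrite !IH ?mulr0 ?addr0 // ltnW.
Qed.

Lemma esym_size xs : esym (size xs) xs = \prod_(x <- xs) x.
Proof.
elim: xs => [|x xs IH] /=; first by rewrite big_nil.
by rewrite IH esym_gt_size // addr0 big_cons.
Qed.

Lemma esym_incr (T : eqType) (f : T -> R) (L : seq T) x k : uniq L -> x \in L ->
  esym k.+1 [seq (x == a)%:R + f a | a <- L]
  = esym k.+1 (map f L) + esym k (map f (rem x L)).
Proof.
elim: L k => [|a L IH] k //= /andP [aL uL]; rewrite inE.
have [->|xa] := eqVneq x a => [_|/= xL].
  have -> : [seq (a == b)%:R + f b | b <- L] = map f L.
    by apply/eq_in_map => b bL; rewrite eq_sym (negPf (memPn aL b bL)) add0r.
  by rewrite mulrDl mul1r [RHS]addrC addrA.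
rewrite add0r IH //; case: k => [|k]; first by rewrite !esym0 addrA.
by rewrite IH // mulrDr addrACA.
Qed.

Lemma esym_map0 (T : Type) k (s : seq T) :
  esym k [seq 0 | _ <- s] = (k == 0%N)%:R.
Proof. by elim: s k => [|a s IH] [|k] //=; rewrite IH mul0r add0r. Qed.
End Esym.

Section Subsequences.
Variable T : eqType.

Fixpoint subseqs (w : seq T) : seq (seq T) :=
  if w is x :: w' then map (cons x) (subseqs w') ++ subseqs w' else [:: [::]].

Lemma mem_subseqs u w : (u \in subseqs w) = subseq u w.
Proof.
elim: w u => [|x w IH] [|y u] /=;
  rewrite ?mem_seq1 ?mem_cat ?IH ?sub0seq ?orbT //.
have [<-|yx] := eqVneq y x; last first.
  rewrite (_ : _ \in _ = false) //.
  by apply/mapP => -[v _ [/eqP]]; rewrite (negPf yx).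
have cons_inj : injective (cons y) by move=> v v' [].
rewrite (mem_map cons_inj) IH.
by apply/orP/idP => [[//|/(subseq_trans (subseq_cons u y))//]|]; left.
Qed.
End Subsequences.

Definition uniq_word (T : eqType) (L : seq T) (k : nat) (u : seq T) : bool :=
  [&& uniq u, all (mem L) u & size u == k].

Lemma uniq_word_cons (T : eqType) (L : seq T) k x u : uniq L -> x \in L ->
  uniq_word L k.+1 (x :: u) = uniq_word (rem x L) k u.
Proof.
move=> uL xL; rewrite /uniq_word /= eqSS.
have -> : all (mem (rem x L)) u = (x \notin u) && all (mem L) u.
  rewrite -has_pred1 -all_predC -all_predI; apply: eq_all => a.
  by rewrite /= (mem_rem_uniq _ uL) inE andbC.
by rewrite xL; case: (x \notin u); case: (uniq u).
Qed.

Lemma count_uniq_word_subseqs (R : pzSemiRingType) (T : eqType)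
    (L w : seq T) k : uniq L ->
  (count (uniq_word L k) (subseqs w))%:R
  = esym k [seq (count_mem a w)%:R | a <- L] :> R.
Proof.
elim: w L k => [|x w IH] L k uL /=.
  by rewrite /uniq_word /= addn0 esym_map0; case: k.
rewrite count_cat count_map natrD IH // addrC.
under [in RHS]eq_map => a do rewrite natrD.
have [xL|xL] := boolP (x \in L); last first.
  have -> : [seq (x == a)%:R + (count_mem a w)%:R | a <- L]
          = [seq (count_mem a w)%:R | a <- L] :> seq R.
    by apply/eq_in_map => a aL; rewrite (negPf (memPnC xL a aL)) add0r.
  rewrite (eq_count (a2 := pred0)) ?count_pred0 ?addr0 // => u.
  by rewrite /uniq_word /= (negPf xL) andbF.
case: k => [|k].
  rewrite !esym0 (eq_count (a2 := pred0)) ?count_pred0 ?addr0 // => u.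
  by rewrite /uniq_word /= !andbF.
rewrite esym_incr // -(IH (rem x L)) ?rem_uniq //; congr (_ + _%:R).
by apply: eq_count => u; rewrite /= uniq_word_cons.
Qed.

Local Open Scope nat_scope.

Lemma sum_count_mem (T : eqType) (L w : seq T) : uniq L ->
  \sum_(a <- L) count_mem a w = count [in L] w.
Proof.
move=> uL; elim: w => [|x w IH] /=; first by rewrite big1.
rewrite big_split /= IH -big_mkcond /= sum1_count; congr (_ + _).
by rewrite (eq_count (a2 := pred1 x)) ?count_uniq_mem.
Qed.

Definition std (u : seq nat) : seq nat :=
  [seq (count (fun y => y < x) u).+1 | x <- u].

Lemma count_nth (p : pred nat) (u : seq nat) :
  count p u = count (fun j => p (nth 0 u j)) (iota 0 (size u)).
Proof. by rewrite -{1}(mkseq_nth 0 u) /mkseq count_map. Qed.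

Lemma count_lt_iota n x :
  0 < x <= n -> count (fun y => y < x) (iota 1 n) = x.-1.
Proof.
case: x => [//|m] /= lt_m_n.
rewrite -(subnKC (ltnW lt_m_n)) iotaD count_cat add1n.
rewrite (@eq_in_count _ _ predT (iota 1 m)); last first.
  by move=> y; rewrite mem_iota add1n => /andP [_ ->].
rewrite (@eq_in_count _ _ pred0 (iota m.+1 _)); last first.
  by move=> y; rewrite mem_iota => /andP [le_y _]; rewrite ltnNge le_y.
by rewrite count_predT count_pred0 size_iota addn0.
Qed.

Lemma std_perm n pi : is_perm n pi -> std pi = pi.
Proof.
move=> pi_perm; rewrite /std -[RHS]map_id; apply/eq_in_map => x.
rewrite (permP pi_perm) (perm_mem pi_perm) mem_iota add1n ltnS => x_range.
by rewrite count_lt_iota // prednK //; case/andP: x_range.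
Qed.

Lemma std_order_iso u v : order_iso u v -> std u = std v.
Proof.
move=> [sz iso]; apply: (@eq_from_nth _ 0); first by rewrite !size_map.
move=> i; rewrite size_map => lt_i; rewrite !(nth_map 0) -?sz //.
congr S; rewrite (count_nth _ u) (count_nth _ v) -sz.
apply: eq_in_count => j; rewrite mem_iota /= => lt_j.
by apply/idP/idP => /(iso i j lt_i lt_j).
Qed.

Lemma order_iso_uniq u v : order_iso u v -> uniq v -> uniq u.
Proof.
move=> [sz iso] /(uniqP 0) v_inj; apply/(uniqP 0) => i j lt_i lt_j eq_ij.
apply: v_inj; rewrite ?inE -?sz //; apply/eqP.
rewrite eqn_leq leqNgt (leqNgt (nth 0 v j)).
apply/andP; split; apply/negP.
- by move/(iso i j lt_i lt_j); rewrite eq_ij ltnn.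
- by move/(iso j i lt_j lt_i); rewrite eq_ij ltnn.
Qed.

Lemma fact_le_count_uniq_word n w :
  word_over n.+1 w ->
  (forall pi, is_perm n pi -> contains_pattern w pi) ->
  n`! <= count (uniq_word (iota 1 n.+1) n) (subseqs w).
Proof.
move=> w_over w_universal.
rewrite -size_filter -(size_map std).
have <- : size (permutations (iota 1 n)) = n`!.
  by rewrite size_permutations ?iota_uniq // size_iota.
apply: uniq_leq_size; first exact: permutations_uniq.
move=> pi; rewrite mem_permutations => pi_perm.
have [u [u_sub u_iso]] := w_universal pi pi_perm.
rewrite -(std_perm pi_perm) -(std_order_iso u_iso).
apply: map_f; rewrite mem_filter mem_subseqs u_sub andbT; apply/and3P; split.
- by apply: order_iso_uniq u_iso _; rewrite (perm_uniq pi_perm) iota_uniq.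
- apply/allP => x /(mem_subseq u_sub) xw.
  by rewrite inE mem_iota add1n ltnS; apply: (allP w_over).
- by case: u_iso => -> _; rewrite (perm_size pi_perm) size_iota.
Qed.

Local Open Scope ring_scope.

Section MeanBounds.
Variable R : realFieldType.

Lemma bernoulli_le (a b : R) n : 0 <= a -> 0 <= a + b ->
  a ^+ n.+1 + n.+1%:R * a ^+ n * b <= (a + b) ^+ n.+1.
Proof.
move=> a_ge0 ab_ge0; elim: n => [|n IH]; first by rewrite expr0 mulr1 mul1r.
rewrite [(a + b) ^+ n.+2]exprS; apply: le_trans (ler_wpM2l ab_ge0 IH).
rewrite -subr_ge0.
have -> : (a + b) * (a ^+ n.+1 + n.+1%:R * a ^+ n * b)
          - (a ^+ n.+2 + n.+2%:R * a ^+ n.+1 * b) = n.+1%:R * a ^+ n * b ^+ 2.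
  by rewrite !exprS -[n.+2]addn1 -[n.+1]addn1 !natrD; ring.
by rewrite mulr_ge0 ?sqr_ge0 // mulr_ge0 ?ler0n ?exprn_ge0.
Qed.

Lemma prod_le_mean_pow (xs : seq R) : all (>= 0) xs ->
  \prod_(x <- xs) x <= ((\sum_(x <- xs) x) / (size xs)%:R) ^+ size xs.
Proof.
move=> xs_ge0.
rewrite [\prod_(_ <- _) _](big_nth 0) [\sum_(_ <- _) _](big_nth 0) !big_mkord.
have := @leif_AGM R _ predT (fun i : 'I_(size xs) => xs`_i).
rewrite /= card_ord => AGM; apply: (AGM _).1 => i _.
exact: (allP xs_ge0) (mem_nth 0 _).
Qed.

Lemma mean_pow_step (x u : R) k : 0 <= x -> 0 <= u ->
  x * (k.+1%:R * u ^+ k) + u ^+ k.+1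
  <= k.+2%:R * ((x + k.+1%:R * u) / k.+2%:R) ^+ k.+1.
Proof.
move=> x_ge0 u_ge0.
have mean_eq : u + (x - u) / k.+2%:R = (x + k.+1%:R * u) / k.+2%:R.
  by rewrite -[k.+2%:R]natr1; field; rewrite nat1r natr1 pnatr_eq0.
have mean_ge0 : 0 <= u + (x - u) / k.+2%:R.
  by rewrite mean_eq divr_ge0 ?ler0n // addr_ge0 // mulr_ge0 ?ler0n.
have expand : k.+2%:R * (u ^+ k.+1 + k.+1%:R * u ^+ k * ((x - u) / k.+2%:R))
              = x * (k.+1%:R * u ^+ k) + u ^+ k.+1.
  by rewrite -[k.+2%:R]natr1 exprS; field; rewrite nat1r natr1 pnatr_eq0.
by rewrite -expand -mean_eq ler_wpM2l ?ler0n ?bernoulli_le.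
Qed.

Lemma esym_le_mean_pow k (xs : seq R) : size xs = k.+1 -> all (>= 0) xs ->
  esym k xs <= k.+1%:R * ((\sum_(x <- xs) x) / k.+1%:R) ^+ k.
Proof.
elim: k xs => [|k IH] [|x ys] //=; first by rewrite expr0 mulr1.
move=> [size_ys] /andP [x_ge0 ys_ge0].
set u := (\sum_(y <- ys) y) / k.+1%:R.
have u_ge0 : 0 <= u.
  by rewrite divr_ge0 ?ler0n // big_seq sumr_ge0 // => y /(allP ys_ge0).
have -> : \sum_(y <- x :: ys) y = x + k.+1%:R * u.
  by rewrite big_cons /u mulrC mulfVK ?pnatr_eq0.
apply: le_trans (mean_pow_step k x_ge0 u_ge0); apply: lerD.
  by rewrite ler_wpM2l // IH.
by rewrite /u -size_ys esym_size prod_le_mean_pow.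
Qed.
End MeanBounds.

Theorem mainTheorem8 (n : nat) (w : seq nat) :
  (1 <= n)%N ->
  word_over n.+1 w ->
  (forall pi : seq nat, is_perm n pi -> contains_pattern w pi) ->
  ((n`!)%:R <= (n.+1)%:R * ((size w)%:R / (n.+1)%:R) ^+ n :> rat)%R.
Proof.
(* The bound holds for n = 0 as well. *)
move=> _ w_over w_universal.
pose c : seq rat := [seq (count_mem a w)%:R | a <- iota 1 n.+1].
have sum_c : \sum_(x <- c) x = (size w)%:R.
  rewrite big_map -natr_sum sum_count_mem ?iota_uniq // -(count_predT w).
  congr _%:R; apply: eq_in_count => x /(allP w_over).
  by rewrite mem_iota add1n ltnS.
rewrite -sum_c; apply: le_trans (esym_le_mean_pow _ _); last 2 first.
- by rewrite size_map size_iota.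
- by apply/allP => _ /mapP [a _ ->]; apply: ler0n.
rewrite -count_uniq_word_subseqs ?iota_uniq // ler_nat.
exact: fact_le_count_uniq_word.
Qed.
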